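(* Let $(X,\mathcal A,\mu,\mu^{\otimes2},R,I,\Pi_R,G,E_0,\eta)$ be a pre-structural datum satisfying the projection–measure invariance $\mu(\Pi_R^{-1}(B))=\mu(B)$ for all $B\in\mathcal A$ with $B\subseteq R$, and assume $X=R\sqcup I$. Then $\mu(I)=0$.
   Context: A pre-structural datum is a tuple $(X,\mathcal A,\mu,\mu^{\otimes2},R,I,\Pi_R,G,E_0,\eta)$ where: $X$ is a nonempty set; $\mathcal A\subseteq\mathcal P(X)$ is an algebra of sets; $\mu:\mathcal A\to[0,\infty)$ is finitely additive with $\mu(\varnothing)=0$; $\mu^{\otimes2}$ is a finitely additive set function on the algebra generated by rectangles $B_1\times B_2$ ($B_i\in\mathcal A$) with $\mu^{\otimes2}(B_1\times B_2)=\mu(B_1)\mu(B_2)$; $R,I\in\mathcal A$ are disjoint; $\Pi_R:X\to R$ is a map; $G\subseteq X\times X$ lies in that product algebra; $E_0\in(0,\infty)$; $\eta\in[0,1]$. *)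

From HB Require Import structures.
From mathcomp Require Import all_boot all_order all_algebra.
From mathcomp Require Import boolp classical_sets reals.
Set Implicit Arguments. Unset Strict Implicit. Unset Printing Implicit Defensive.
Import Order.TTheory GRing.Theory Num.Theory.
Local Open Scope classical_set_scope.
Local Open Scope ring_scope.

Definition is_set_algebra (T : Type) (A : set (set T)) : Prop :=
  [/\ A set0,
      (forall B, A B -> A (~` B)) &
      (forall B1 B2, A B1 -> A B2 -> A (B1 `|` B2))].

Definition gen_set_algebra (T : Type) (F : set (set T)) : set (set T) :=
  fun S => forall A', is_set_algebra A' -> F `<=` A' -> A' S.

Definition rectangles (X : Type) (A : set (set X)) : set (set (X * X)) :=
  fun S => exists B1 B2, [/\ A B1, A B2 & S = B1 `*` B2].

Definition prod_set_algebra (X : Type) (A : set (set X)) : set (set (X * X)) :=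
  gen_set_algebra (rectangles A).

Definition fin_add_nonneg (R : realType) (T : Type) (A : set (set T))
    (mu : set T -> R) : Prop :=
  [/\ mu set0 = 0,
      (forall B, A B -> 0 <= mu B) &
      (forall B1 B2, A B1 -> A B2 -> B1 `&` B2 = set0 ->
         mu (B1 `|` B2) = mu B1 + mu B2)].

(* Pre-structural datum (X, A, mu, mu2, Rg, Ig, PiR, G, E0, eta).
   The map Pi_R : X -> R is represented as PiR : X -> X with values in Rg. *)
Definition pre_structural_datum (R : realType) (X : Type)
    (A : set (set X)) (mu : set X -> R) (mu2 : set (X * X) -> R)
    (Rg Ig : set X) (PiR : X -> X) (G : set (X * X)) (E0 eta : R) : Prop :=
  [/\ inhabited X,
      is_set_algebra A,
      fin_add_nonneg A mu,
      fin_add_nonneg (prod_set_algebra A) mu2 &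
    [/\ (forall B1 B2, A B1 -> A B2 -> mu2 (B1 `*` B2) = mu B1 * mu B2),
      [/\ A Rg, A Ig & Rg `&` Ig = set0],
      (forall x, Rg (PiR x)),
      prod_set_algebra A G &
      [/\ 0 < E0, 0 <= eta & eta <= 1]]].

Definition projection_measure_invariance (R : realType) (X : Type)
    (A : set (set X)) (mu : set X -> R) (Rg : set X) (PiR : X -> X) : Prop :=
  forall B, A B -> B `<=` Rg -> A (PiR @^-1` B) /\ mu (PiR @^-1` B) = mu B.

From HB Require Import structures.
From mathcomp Require Import all_boot all_order all_algebra.
From mathcomp Require Import boolp classical_sets reals.
Import Order.TTheory GRing.Theory Num.Theory.
Local Open Scope classical_set_scope.
Local Open Scope ring_scope.

(* Since Pi_R maps everything into R, the preimage of R is all of X, so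
   invariance gives mu(X) = mu(R); additivity over X = R + I then forces
   mu(I) = 0. *)

Lemma preimage_setT_of_subrange {T U : Type} {f : T -> U} {S : set U} :
  (forall x, S (f x)) -> f @^-1` S = setT.
Proof. by move=> fS; apply/seteqP; split=> // x _; exact: fS. Qed.

Lemma fin_add_null_of_disjoint_eq {R : realType} {T : Type} {A : set (set T)}
    {mu : set T -> R} {B1 B2 : set T} :
  fin_add_nonneg A mu -> A B1 -> A B2 -> B1 `&` B2 = set0 ->
  mu (B1 `|` B2) = mu B1 -> mu B2 = 0.
Proof.
move=> [_ _ addmu] AB1 AB2 B12 /eqP.
by rewrite addmu // -subr_eq0 addrC addKr => /eqP.
Qed.

Lemma projection_measure_invariance_setT {R : realType} {X : Type}
    {A : set (set X)} {mu : set X -> R} {Rg : set X} {PiR : X -> X} :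
  projection_measure_invariance A mu Rg PiR -> A Rg ->
  (forall x, Rg (PiR x)) -> mu setT = mu Rg.
Proof.
move=> inv ARg PiRg.
have [_ <-] := inv Rg ARg (@subset_refl _ Rg).
by rewrite preimage_setT_of_subrange.
Qed.

Theorem proposition4p3 (R : realType) (X : Type)
    (A : set (set X)) (mu : set X -> R) (mu2 : set (X * X) -> R)
    (Rg Ig : set X) (PiR : X -> X) (G : set (X * X)) (E0 eta : R) :
  pre_structural_datum A mu mu2 Rg Ig PiR G E0 eta ->
  projection_measure_invariance A mu Rg PiR ->
  Rg `|` Ig = setT ->
  mu Ig = 0.
Proof.
move=> [_ _ mu_add _ [_ [ARg AIg RIg0] PiRg _ _]] inv RUI.
apply: (fin_add_null_of_disjoint_eq mu_add ARg AIg RIg0).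
by rewrite RUI (projection_measure_invariance_setT inv ARg PiRg).
Qed.
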